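(* Let $\Omega\subset\mathbb{R}^n$ be a domain with $\mathrm{width}(\Omega)<+\infty$, $f\in L^\infty(\Omega)$, $g\in C(\partial\Omega)\cap L^\infty(\partial\Omega)$, $(\varepsilon_i)$ a sequence of positive numbers with $\varepsilon_i\to0$, and for each $i$ let $u_i:\overline\Omega\to\mathbb{R}$ be a bounded solution of $\Delta^{\varepsilon_i}_\infty u_i=\varepsilon_i^2 f$ in $\Omega$, $u_i=g$ on $\partial\Omega$. Then the functions $u_i$ are uniformly bounded, i.e. $\sup_i\sup_{\overline\Omega}|u_i|<+\infty$.
   Context: $d(x,y)$ is the intrinsic metric of $\overline\Omega$ (infimum of lengths of paths in $\overline\Omega$ from $x$ to $y$); $\mathrm{width}(\Omega)=\sup_{x\in\Omega}\inf_{y\in\partial\Omega}d(y,x)$. For $\varepsilon>0$, $B_x(\varepsilon)=\{y\in\overline\Omega: d(x,y)<\varepsilon\}$ and $\Delta^{\varepsilon}_\infty w(x)=\inf_{y\in B_x(\varepsilon)}w(y)+\sup_{y\in B_x(\varepsilon)}w(y)-2w(x)$. *)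

From HB Require Import structures.
From mathcomp Require Import all_boot all_order all_algebra.
From mathcomp Require Import all_classical all_reals all_analysis.
Set Implicit Arguments. Unset Strict Implicit. Unset Printing Implicit Defensive.
Import Order.TTheory GRing.Theory Num.Theory.
Import numFieldNormedType.Exports.
Local Open Scope classical_set_scope.
Local Open Scope ring_scope.

Section Defs.
Context {R : realType} {n : nat}.
Notation V := 'rV[R]_n.

Definition enorm (v : V) : R := Num.sqrt (\sum_(i < n) (v ord0 i) ^+ 2).

Definition bdry (A : set V) : set V := closure A `\` interior A.

Definition path_length (gamma : R -> V) : \bar R :=
  ereal_sup [set l | exists (m : nat) (t : nat -> R),
     [/\ t 0%N = 0, t m = 1,
        (forall k, (k < m)%N -> t k <= t k.+1) &
        l = (\sum_(k < m) enorm (gamma (t k.+1) - gamma (t k)))%:E]].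

Definition path_in (A : set V) (x y : V) (gamma : R -> V) : Prop :=
  {within `[0, 1], continuous gamma} /\
  (forall t, 0 <= t <= 1 -> A (gamma t)) /\ gamma 0 = x /\ gamma 1 = y.

Definition idist (Omega : set V) (x y : V) : \bar R :=
  ereal_inf [set path_length gamma | gamma in path_in (closure Omega) x y].

Definition width (Omega : set V) : \bar R :=
  ereal_sup [set ereal_inf [set idist Omega y x | y in bdry Omega]
            | x in Omega].

Definition iball (Omega : set V) (x : V) (eps : R) : set V :=
  [set y | closure Omega y /\ (idist Omega x y < eps%:E)%E].

Definition dlap (Omega : set V) (eps : R) (w : V -> R) (x : V) : R :=
  inf [set w y | y in iball Omega x eps] + sup [set w y | y in iball Omega x eps]
  - 2 * w x.

End Defs.

(* Fix eps and let s(x) be the least number of steps of intrinsic length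
   < eps leading from x to the boundary.  Arclength along a continuous
   rectifiable path is continuous, so a path of length < W from x to the
   boundary can be cut into pieces of length <= eps/2: s < K := 2W/eps + 2.
   The quadratic barrier psi = b s (2K - s), with b = eps^2 (sup|f| + 1) / 2,
   has second differences -2b along a step towards the boundary, so it is a
   strict supersolution compared with dlap u = eps^2 f >= -eps^2 sup|f|.
   At a near-maximum of u - psi this forces u <= sup|g| + b K^2
   <= sup|g| + (sup|f| + 1) (2W + 2 eps)^2 / 2, which is uniform in i since
   (eps_i) is bounded; the same argument applied to -u bounds u below. *)

From HB Require Import structures.
From mathcomp Require Import all_boot all_order all_algebra.
From mathcomp Require Import all_classical all_reals all_analysis.
From mathcomp Require Import ring lra zify.
Import Order.TTheory GRing.Theory Num.Theory.
Import numFieldNormedType.Exports.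
Local Open Scope classical_set_scope.
Local Open Scope ring_scope.
Set Implicit Arguments. Unset Strict Implicit. Unset Printing Implicit Defensive.

Section EuclideanNorm.
Context {R : realType} {n : nat}.
Notation V := 'rV[R]_n.
Implicit Types (a b : 'I_n -> R) (v w : V).

Lemma sum_mul_le_sqrt a b :
  \sum_i a i * b i <= Num.sqrt (\sum_i a i ^+ 2) * Num.sqrt (\sum_i b i ^+ 2).
Proof.
set A := \sum_i a i ^+ 2; set B := \sum_i b i ^+ 2; set C := \sum_i a i * b i.
have A0 : 0 <= A by apply: sumr_ge0 => i _; exact: sqr_ge0.
rewrite -sqrtrM // (le_trans (ler_norm C)) // -sqrtr_sqr ler_wsqrtr //.
have [A_eq0 | A_neq0] := eqVneq A 0.
  have a0 i : a i = 0.
    by apply/eqP; rewrite -sqrf_eq0 (psumr_eq0P _ A_eq0) // => j _; exact: sqr_ge0.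
  by rewrite A_eq0 mul0r /C big1 ?expr0n // => i _; rewrite a0 mul0r.
(* Lagrange's trick: [0 <= sum_i (A b_i - C a_i)^2 = A (A B - C^2)] *)
have : 0 <= \sum_i (A * b i - C * a i) ^+ 2 by apply: sumr_ge0 => i _; exact: sqr_ge0.
have -> : \sum_i (A * b i - C * a i) ^+ 2 = A * (A * B - C ^+ 2).
  rewrite (eq_bigr (fun i => A ^+ 2 * b i ^+ 2 - 2 * A * C * (a i * b i) + C ^+ 2 * a i ^+ 2));
    last by move=> i _; ring.
  by rewrite big_split sumrB /= -!mulr_sumr -/A -/B -/C; ring.
by rewrite pmulr_rge0 ?subr_ge0 // lt_def A_neq0 A0.
Qed.

Lemma enorm_ge0 v : 0 <= enorm v.
Proof. exact: sqrtr_ge0. Qed.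

Lemma enorm0 : enorm (0 : V) = 0.
Proof. by rewrite /enorm big1 ?sqrtr0 // => i _; rewrite mxE expr0n. Qed.

Lemma enormN v : enorm (- v) = enorm v.
Proof. by rewrite /enorm; under eq_bigr => i _ do rewrite mxE sqrrN. Qed.

Lemma enorm_eq0 v : enorm v = 0 -> v = 0.
Proof.
have sq_ge0 (i : 'I_n) : true -> 0 <= v ord0 i ^+ 2 by move=> _; exact: sqr_ge0.
move=> /eqP; rewrite sqrtr_eq0 => sum_le0; apply/rowP => i; apply/eqP.
rewrite mxE -sqrf_eq0 (psumr_eq0P sq_ge0 (le_anti _)) //.
by rewrite sum_le0 sumr_ge0.
Qed.

Lemma enormB v w : enorm (v - w) = enorm (w - v).
Proof. by rewrite -enormN opprB. Qed.

Lemma enormD v w : enorm (v + w) <= enorm v + enorm w.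
Proof.
rewrite -(ger0_norm (addr_ge0 (enorm_ge0 v) (enorm_ge0 w))) -sqrtr_sqr ler_wsqrtr //.
have sum_sq_ge0 (c : 'I_n -> R) : 0 <= \sum_i c i ^+ 2.
  by apply: sumr_ge0 => i _; exact: sqr_ge0.
have := sum_mul_le_sqrt (fun i => v ord0 i) (fun i => w ord0 i).
rewrite /enorm sqrrD !sqr_sqrtr ?sum_sq_ge0 // => CS.
rewrite (eq_bigr (fun i => v ord0 i ^+ 2 + w ord0 i ^+ 2 + (v ord0 i * w ord0 i) *+ 2));
  last by move=> i _; rewrite mxE; ring.
rewrite !big_split /= mulr2n; lra.
Qed.

Lemma enorm_triangle u v w : enorm (u - w) <= enorm (u - v) + enorm (v - w).
Proof. by rewrite -[u - w](subrKA v) enormD. Qed.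

Lemma enorm_le_mx_norm v : enorm v <= n%:R * `|v|.
Proof.
rewrite -(ger0_norm (mulr_ge0 (ler0n _ n) (normr_ge0 v))) -sqrtr_sqr ler_wsqrtr //.
have vi_le i : `|v ord0 i| <= `|v|.
  by rewrite [leRHS]/Num.Def.normr /= mx_normrE; apply/bigmax_geP; right; exists (ord0, i).
apply: (@le_trans _ _ (\sum_(i < n) `|v| ^+ 2)).
  by apply: ler_sum => i _; rewrite -real_normK ?num_real // lerXn2r ?nnegrE.
rewrite sumr_const card_ord -[_ *+ n]mulr_natr exprMn mulrC.
apply: ler_wpM2r; first exact: sqr_ge0.
by rewrite -natrX ler_nat expnS expn1; case: (n) => // k; rewrite leq_pmulr.
Qed.

End EuclideanNorm.

Section ChordSums.
Context {R : realType} {n : nat}.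
Notation V := 'rV[R]_n.
Implicit Types (gam : R -> V) (t p q : nat -> R) (a b c L : R).

Definition is_partition a b m t :=
  [/\ t 0%N = a, t m = b & forall k, (k < m)%N -> t k <= t k.+1].

Definition chord_sum gam m t := \sum_(k < m) enorm (gam (t k.+1) - gam (t k)).

Definition chord_sums_le gam a b L :=
  forall m t, is_partition a b m t -> chord_sum gam m t <= L.

Lemma chord_sum_ge0 gam m t : 0 <= chord_sum gam m t.
Proof. by apply: sumr_ge0 => k _; exact: enorm_ge0. Qed.

Lemma partition_homo a b m t : is_partition a b m t ->
  forall i j, (i <= j <= m)%N -> t i <= t j.
Proof.
case=> _ _ t_homo i j /andP[ij jm]; elim: j ij jm => [|j IHj] ij jm.
  by rewrite leqn0 in ij; rewrite (eqP ij).
move: ij; rewrite leq_eqVlt => /predU1P[-> //|ij].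
exact: le_trans (IHj ij (ltnW jm)) (t_homo j jm).
Qed.

Lemma partition_bounds a b m t : is_partition a b m t ->
  forall k, (k <= m)%N -> a <= t k <= b.
Proof.
move=> tP k km; case: (tP) => t0 tm _.
by rewrite -{1}t0 -{1}tm !(partition_homo tP) ?leq0n ?leqnn ?km.
Qed.

Definition partition1 a b : nat -> R := fun k => if k == 0%N then a else b.

Lemma partition1P a b : a <= b -> is_partition a b 1 (partition1 a b).
Proof. by move=> ab; split => // -[]. Qed.

Lemma chord_sum1 gam a b : chord_sum gam 1 (partition1 a b) = enorm (gam b - gam a).
Proof. by rewrite /chord_sum big_ord1. Qed.

Lemma chord_sum_near gam m t x0 r :
  (forall k, (k <= m)%N -> enorm (gam (t k) - gam x0) <= r) ->
  chord_sum gam m t <= m%:R * (2 * r).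
Proof.
move=> near_x0.
have step k : (k < m)%N -> enorm (gam (t k.+1) - gam (t k)) <= 2 * r.
  move=> km; apply: le_trans (enorm_triangle _ (gam x0) _) _.
  have := near_x0 _ km; have := near_x0 _ (ltnW km); rewrite enormB; lra.
rewrite /chord_sum (le_trans (ler_sum _ (fun (k : 'I_m) _ => step k (ltn_ord k)))) //.
by rewrite sumr_const card_ord -[_ *+ m]mulr_natl.
Qed.

Section Clamp.
Variables (a b c : R) (m : nat) (t : nat -> R).
Hypotheses (tP : is_partition a b m t) (ac : a <= c) (cb : c <= b).

Lemma partition_minr : is_partition a c m (fun k => Order.min (t k) c).
Proof.
case: tP => t0 tm t_homo; split; first by rewrite t0 min_l.
  by rewrite tm min_r.
by move=> k km; apply: le_min2 => //; exact: t_homo.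
Qed.

Lemma partition_maxr : is_partition c b m (fun k => Order.max (t k) c).
Proof.
case: tP => t0 tm t_homo; split; first by rewrite t0 max_r.
  by rewrite tm max_l.
by move=> k km; apply: le_max2 => //; exact: t_homo.
Qed.

Lemma chord_sum_split gam : chord_sum gam m t <=
  chord_sum gam m (fun k => Order.min (t k) c) + chord_sum gam m (fun k => Order.max (t k) c).
Proof.
rewrite /chord_sum -big_split /=; apply: ler_sum => k _.
case: tP => _ _ /(_ k (ltn_ord k)) tk_le.
have [tk1c|ctk1] := leP (t k.+1) c.
  by rewrite (min_l (le_trans tk_le tk1c)) (max_r (le_trans tk_le tk1c)) subrr enorm0 addr0.
have [tkc|ctk] := leP (t k) c; last by rewrite subrr enorm0 add0r.
by rewrite addrC enorm_triangle.
Qed.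

End Clamp.

Definition partition_cat m p q : nat -> R :=
  fun k => if (k <= m)%N then p k else q (k - m)%N.

Section Cat.
Variables (a b c : R) (m1 m2 : nat) (p q : nat -> R).
Hypotheses (pP : is_partition a c m1 p) (qP : is_partition c b m2 q).

Lemma partition_catP : is_partition a b (m1 + m2) (partition_cat m1 p q).
Proof.
case: pP qP => p0 pm p_homo [q0 qm q_homo]; rewrite /partition_cat.
split; first by rewrite leq0n.
  case: ifP => [|_]; last by rewrite addKn.
  rewrite -{2}(addn0 m1) leq_add2l leqn0 => /eqP m20.
  by rewrite m20 addn0 pm -q0 -qm m20.
move=> k km; case: (ltngtP k m1) => [km1|m1k|k_m1].
- exact: p_homo.
- by rewrite subSn ?(ltnW m1k) // q_homo // ltn_subLR // ltnW.
- by rewrite k_m1 subSn // subnn pm -q0 q_homo // -(ltn_add2l m1) addn0 -{1}k_m1.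
Qed.

Lemma chord_sum_cat gam : chord_sum gam (m1 + m2) (partition_cat m1 p q) =
  chord_sum gam m1 p + chord_sum gam m2 q.
Proof.
case: pP qP => _ pm _ [q0 _ _]; rewrite /chord_sum big_split_ord /=.
congr (_ + _); apply: eq_bigr => k _; rewrite /partition_cat.
  by rewrite ltn_ord ltnW.
have -> : (m1 + k < m1)%N = false by lia.
have -> : ((m1 + k).+1 - m1 = k.+1)%N by lia.
have [->|k_gt0] := posnP k; first by rewrite addn0 leqnn pm q0.
have -> : (m1 + k <= m1)%N = false by lia.
by rewrite addKn.
Qed.

End Cat.

Lemma chord_sums_le_sub gam a' b' a b L : chord_sums_le gam a' b' L ->
  a' <= a -> a <= b -> b <= b' -> chord_sums_le gam a b L.
Proof.
move=> gamL a'a ab bb' m t tP.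
have left_tP := partition_catP (partition1P a'a) tP.
have := gamL _ _ (partition_catP left_tP (partition1P bb')).
rewrite (chord_sum_cat left_tP (partition1P bb')) (chord_sum_cat (partition1P a'a) tP).
rewrite !chord_sum1.
by have := enorm_ge0 (gam a - gam a'); have := enorm_ge0 (gam b' - gam b); lra.
Qed.

End ChordSums.

Lemma within_continuousP {R : realType} (V : normedModType R) (A : set R) (f : R -> V) :
  {within A, continuous f} <->
  (forall x, A x -> forall e, 0 < e -> exists2 d, 0 < d &
     forall y, A y -> `|x - y| < d -> `|f x - f y| < e).
Proof.
split=> [/subspace_continuousP fA x Ax e e0|fA].
  have /cvgrPdist_lt/(_ e e0) := fA x Ax.
  by rewrite near_withinE => /nbhs_normP[d d0 fd]; exists d => // y Ay xy; exact: fd.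
apply/subspace_continuousP => x Ax; apply/cvgrPdist_lt => e e0.
rewrite near_withinE; apply/nbhs_normP.
by have [d d0 fd] := fA x Ax e e0; exists d => //= y xy Ay; exact: fd.
Qed.

Section Arclength.
Context {R : realType} {n : nat}.
Notation V := 'rV[R]_n.
Variables (gam : R -> V) (L : R).
Hypothesis gamL : chord_sums_le gam 0 1 L.

Definition arclen a b : R :=
  sup [set x | exists m t, is_partition a b m t /\ x = chord_sum gam m t].

Section Bounds.
Variables (a b : R).
Hypotheses (a0 : 0 <= a) (ab : a <= b) (b1 : b <= 1).

Let arclen_has_sup :
  has_sup [set x | exists m t, is_partition a b m t /\ x = chord_sum gam m t].
Proof.
split; first by exists (chord_sum gam 1 (partition1 a b)), 1%N, (partition1 a b);
  split => //; exact: partition1P.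
by exists L => _ [m [t [tP ->]]]; exact: (chord_sums_le_sub gamL a0 ab b1).
Qed.

Lemma chord_sum_le_arclen m t : is_partition a b m t -> chord_sum gam m t <= arclen a b.
Proof. by move=> tP; apply: (sup_upper_bound arclen_has_sup); exists m, t. Qed.

Lemma arclen_approx e : 0 < e ->
  exists m t, is_partition a b m t /\ arclen a b - e < chord_sum gam m t.
Proof.
by move=> e0; have [_ [m [t [tP ->]]] ?] := sup_adherent e0 arclen_has_sup; exists m, t.
Qed.

Lemma enorm_le_arclen : enorm (gam b - gam a) <= arclen a b.
Proof. by rewrite -chord_sum1; exact: chord_sum_le_arclen (partition1P ab). Qed.

Lemma arclen_ge0 : 0 <= arclen a b.
Proof. exact: le_trans (enorm_ge0 _) enorm_le_arclen. Qed.

End Bounds.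

Lemma arclen_le a b M : a <= b -> chord_sums_le gam a b M -> arclen a b <= M.
Proof.
move=> ab gamM; apply: ge_sup => [|_ [m [t [tP ->]]]]; last exact: gamM.
exists (chord_sum gam 1 (partition1 a b)), 1%N, (partition1 a b).
by split => //; exact: partition1P.
Qed.

Lemma arclen_add a c b : 0 <= a -> a <= c -> c <= b -> b <= 1 ->
  arclen a b = arclen a c + arclen c b.
Proof.
move=> a0 ac cb b1; have ab := le_trans ac cb.
apply/eqP; rewrite eq_le; apply/andP; split.
  apply: arclen_le => // m t tP.
  apply: le_trans (chord_sum_split c tP gam) _.
  apply: lerD.
    exact: (chord_sum_le_arclen a0 ac (le_trans cb b1) (partition_minr tP ac cb)).
  exact: (chord_sum_le_arclen (le_trans a0 ac) cb b1 (partition_maxr tP ac cb)).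
(* fix a partition of [c, b], then take the sup over partitions of [a, c] *)
rewrite -lerBrDl; apply: arclen_le => // m2 q qP; rewrite lerBrDl -lerBrDr.
apply: arclen_le => // m1 p pP; rewrite lerBrDr -(chord_sum_cat pP qP).
exact: chord_sum_le_arclen (partition_catP pP qP).
Qed.

Lemma arclenxx a : 0 <= a -> a <= 1 -> arclen a a = 0.
Proof. by move=> a0 a1; have := arclen_add a0 (lexx a) (lexx a) a1; lra. Qed.

End Arclength.

Section ArclengthContinuity.
Context {R : realType} {n : nat}.
Notation V := 'rV[R]_n.
Variables (gam : R -> V) (L : R).
Hypotheses (gamL : chord_sums_le gam 0 1 L) (gam_cont : {within `[0, 1], continuous gam}).

Lemma path_enorm_continuous x e : 0 <= x <= 1 -> 0 < e -> exists2 d, 0 < d &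
  forall y, 0 <= y <= 1 -> `|x - y| < d -> enorm (gam x - gam y) < e.
Proof.
move=> x01 e0; have n1_gt0 : 0 < n%:R + 1 :> R by rewrite ltr_wpDl.
have x_in : `[0, 1]%classic x by rewrite /= in_itv.
have [d d0 gam_near] := (within_continuousP _ _).1 gam_cont x x_in _ (divr_gt0 e0 n1_gt0).
exists d => // y y01 xy; apply: le_lt_trans (enorm_le_mx_norm _) _.
have := gam_near y ltac:(by rewrite /= in_itv) xy.
rewrite ltr_pdivlMr // => lt_e.
have := normr_ge0 (gam x - gam y); nra.
Qed.

Lemma arclen_small t0 e : 0 <= t0 <= 1 -> 0 < e -> exists2 d, 0 < d &
  forall c c', 0 <= c -> c <= c' -> c' <= 1 -> t0 - d < c -> c' < t0 + d ->
  arclen gam c c' < e.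
Proof.
move=> t0_01 e0.
have e2_gt0 : 0 < e / 2 by rewrite divr_gt0.
have [m [t [tP t_approx]]] := arclen_approx gamL (lexx 0) ler01 (lexx 1) e2_gt0.
have m1_gt0 : 0 < m%:R + 1 :> R by rewrite ltr_wpDl.
have r_gt0 : 0 < e / (4 * (m%:R + 1)) by rewrite divr_gt0 // mulr_gt0.
have [d d0 gam_near] := path_enorm_continuous t0_01 r_gt0.
exists d => // c c' c0 cc' c'1 dc c'd; have c1 := le_trans cc' c'1.
pose t1 k := Order.max (t k) c; pose t2 k := Order.min (t1 k) c'.
have t1P : is_partition c 1 m t1 := partition_maxr tP c0 c1.
have t2P : is_partition c c' m t2 := partition_minr t1P cc' c'1.
(* [t] splits into pieces over [0, c], [c, c'] and [c', 1]; only the middle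
   one is not controlled by the arclength, and it is short by continuity *)
have t2_small : chord_sum gam m t2 <= e / 2.
  apply: le_trans (chord_sum_near (x0 := t0) _) _.
    move=> k km; have /andP[ck kc'] := partition_bounds t2P km.
    rewrite enormB; apply/ltW/gam_near; first by rewrite (le_trans c0 ck) (le_trans kc' c'1).
    by rewrite ltr_norml; apply/andP; split; lra.
  have -> : m%:R * (2 * (e / (4 * (m%:R + 1)))) = e / 2 * (m%:R / (m%:R + 1)) :> R.
    by field; rewrite gt_eqF.
  by rewrite ler_piMr ?divr_ge0 ?ltW // ltr_pdivrMr // mul1r ltrDl.
have := chord_sum_split c tP gam; have := chord_sum_split c' t1P gam.
have := chord_sum_le_arclen gamL (lexx 0) c0 c1 (partition_minr tP c0 c1).
have := chord_sum_le_arclen gamL (le_trans c0 cc') c'1 (lexx 1)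
  (partition_maxr t1P cc' c'1).
rewrite (arclen_add gamL (lexx 0) c0 c1 (lexx 1)) in t_approx.
rewrite (arclen_add gamL c0 cc' c'1 (lexx 1)) in t_approx.
rewrite -/t1 -/t2 in t2_small *; lra.
Qed.

Lemma arclen0_continuous : {within `[0, 1], continuous (arclen gam 0)}.
Proof.
apply/within_continuousP => x /= /[!in_itv] /= /andP[x0 x1] e e0.
have [d d0 small] := arclen_small (introT andP (conj x0 x1)) e0.
exists d => // y /= /[!in_itv] /= /andP[y0 y1] xy; rewrite ltr_norml in xy.
have [xy_le|yx_lt] := leP x y.
  rewrite (arclen_add gamL (lexx 0) x0 xy_le y1) opprD addNKr normrN ger0_norm.
    by apply: small => //; lra.
  exact: (arclen_ge0 gamL x0 xy_le y1).
rewrite (arclen_add gamL (lexx 0) y0 (ltW yx_lt) x1) addrAC subrr add0r ger0_norm.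
  by apply: small => //; rewrite ?ltW //; lra.
exact: (arclen_ge0 gamL y0 (ltW yx_lt) x1).
Qed.

Lemma arclen0_ivt v : 0 <= v -> v <= arclen gam 0 1 ->
  exists2 c, 0 <= c <= 1 & arclen gam 0 c = v.
Proof.
move=> v0 v1; have [|c] := IVT ler01 arclen0_continuous (v := v).
  rewrite (arclenxx gamL (lexx 0) ler01).
  by rewrite (min_l (le_trans v0 v1)) (max_r (le_trans v0 v1)) v0 v1.
by rewrite in_itv; exists c.
Qed.

End ArclengthContinuity.

Section IntrinsicDistance.
Context {R : realType} {n : nat}.
Notation V := 'rV[R]_n.
Implicit Types (gam : R -> V) (Om A : set V) (x y : V).

Lemma chord_sum_le_path_length gam m t :
  is_partition 0 1 m t -> ((chord_sum gam m t)%:E <= path_length gam)%E.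
Proof. by case=> t0 tm t_homo; apply: ereal_sup_ubound; exists m, t. Qed.

Lemma path_length_leP gam L : (path_length gam <= L%:E)%E <-> chord_sums_le gam 0 1 L.
Proof.
split=> [gamL m t tP | gamL].
  by rewrite -lee_fin; exact: le_trans (chord_sum_le_path_length gam tP) gamL.
by apply/ereal_supP => _ [m [t [t0 tm t_homo ->]]]; rewrite lee_fin; apply: gamL.
Qed.

Lemma idist_le_path_length Om x y gam :
  path_in (closure Om) x y gam -> (idist Om x y <= path_length gam)%E.
Proof. by move=> gamP; apply: ereal_inf_lbound; exists gam. Qed.

Lemma continuous_affine_reparam gam p q : {within `[0, 1], continuous gam} ->
  (forall s, 0 <= s <= 1 -> 0 <= p + q * s <= 1) ->
  {within `[0, 1], continuous (fun s => gam (p + q * s))}.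
Proof.
move=> /within_continuousP gam_cont pq01; apply/within_continuousP.
move=> x /= /[!in_itv] /= x01 e e0.
have [|d d0 gam_near] := gam_cont (p + q * x) _ e e0; first by rewrite /= in_itv pq01.
have q1_gt0 : 0 < `|q| + 1 by rewrite ltr_wpDl.
exists (d / (`|q| + 1)); first by rewrite divr_gt0.
move=> y /= /[!in_itv] /= y01; rewrite ltr_pdivlMr // => xy.
apply: gam_near; first by rewrite /= in_itv pq01.
rewrite opprD addrACA subrr add0r -mulrBr normrM.
by apply: le_lt_trans xy; rewrite mulrDr mulr1 mulrC lerDl.
Qed.

Lemma path_in_rev A x y gam : path_in A x y gam -> path_in A y x (fun s => gam (1 - s)).
Proof.
case=> gam_cont [gamA [gam0 gam1]]; split; last first.
  by split=> [s s01|]; [apply: gamA; lra | rewrite subr0 subrr].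
rewrite (_ : (fun s => gam (1 - s)) = (fun s => gam (1 + -1 * s))); last first.
  by apply/funext => s; rewrite mulN1r.
by apply: continuous_affine_reparam => // s s01; rewrite mulN1r; lra.
Qed.

Lemma path_length_rev gam : (path_length (fun s => gam (1 - s)%R) <= path_length gam)%E.
Proof.
apply/ereal_supP => _ [m [t [t0 tm t_homo ->]]].
pose t' k := 1 - t (m - k)%N.
have t'P : is_partition 0 1 m t'.
  split; first by rewrite /t' subn0 tm subrr.
    by rewrite /t' subnn t0 subr0.
  move=> k km; rewrite /t' lerD2l lerN2.
  have -> : (m - k = (m - k.+1).+1)%N by lia.
  apply: t_homo; lia.
apply: le_trans (chord_sum_le_path_length gam t'P).
rewrite lee_fin (reindex_inj rev_ord_inj) /=; apply: ler_sum => k _.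
have -> : ((m - k.+1).+1 = m - k)%N by have := ltn_ord k; lia.
by rewrite /t' enormB.
Qed.

Lemma idist_sym Om x y : idist Om x y = idist Om y x.
Proof.
wlog suff : x y / (idist Om x y <= idist Om y x)%E.
  by move=> idist_le; apply/eqP; rewrite eq_le !idist_le.
rewrite [X in (_ <= X)%E]/idist; apply/ereal_infP => _ [gam gamP <-].
exact: le_trans (idist_le_path_length (path_in_rev gamP)) (path_length_rev gam).
Qed.

Lemma idist_le_arclen Om gam L a b :
  {within `[0, 1], continuous gam} -> (forall s, 0 <= s <= 1 -> closure Om (gam s)) ->
  chord_sums_le gam 0 1 L -> 0 <= a -> a <= b -> b <= 1 ->
  (idist Om (gam a) (gam b) <= (arclen gam a b)%:E)%E.
Proof.
move=> gam_cont gamOm gamL a0 ab b1.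
have ba0 : 0 <= b - a by rewrite subr_ge0.
have ab01 s : 0 <= s <= 1 -> 0 <= a + (b - a) * s <= 1.
  move=> /andP[s0 s1]; have : (b - a) * s <= b - a by rewrite ler_piMr.
  by have := mulr_ge0 ba0 s0; lra.
have subP : path_in (closure Om) (gam a) (gam b) (fun s => gam (a + (b - a) * s)).
  split; first exact: continuous_affine_reparam.
  by split=> [s s01|]; [exact/gamOm/ab01 | rewrite mulr0 addr0 mulr1 addrC subrK].
apply: le_trans (idist_le_path_length subP) _; apply/path_length_leP => m t tP.
apply: (chord_sum_le_arclen gamL a0 ab b1 (t := fun k => a + (b - a) * t k)).
case: tP => t0 tm t_homo; split; first by rewrite t0 mulr0 addr0.
  by rewrite tm mulr1 addrC subrK.
by move=> k km; rewrite lerD2l ler_wpM2l ?subr_ge0 ?t_homo.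
Qed.

End IntrinsicDistance.

Section BoundaryChains.
Context {R : realType} {n : nat}.
Notation V := 'rV[R]_n.
Variables (Om : set V) (eps : R).

Definition bdry_chain (x : V) (N : nat) : Prop :=
  exists z : nat -> V, [/\ z 0%N = x, bdry Om (z N) &
    forall j, (j < N)%N -> iball Om (z j) eps (z j.+1)].

Lemma bdry_chain0 x : bdry Om x -> bdry_chain x 0.
Proof. by exists (fun=> x). Qed.

Lemma bdry_chain_cons w x N : iball Om w eps x -> bdry_chain x N -> bdry_chain w N.+1.
Proof.
move=> wx [z [z0 zN z_step]]; exists (fun j => if j is j'.+1 then z j' else w).
by split=> // -[_|j /z_step] //; rewrite z0.
Qed.

Lemma bdry_chain_uncons x N : bdry_chain x N.+1 -> exists2 z, iball Om x eps z & bdry_chain z N.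
Proof.
move=> [z [z0 zN z_step]]; exists (z 1%N); first by rewrite -z0; exact: z_step.
by exists (fun j => z j.+1); split=> // j jN; apply: z_step.
Qed.

Lemma bdry_chain_of_path x y gam L N : path_in (closure Om) x y gam ->
  chord_sums_le gam 0 1 L -> bdry Om y -> 0 < eps -> L <= N%:R * (eps / 2) ->
  bdry_chain x N.
Proof.
case=> gam_cont [gamOm [gam0 gam1]] gamL y_bdry eps0 LN.
set P := arclen gam 0 1.
have P0 : 0 <= P := arclen_ge0 gamL (lexx 0) ler01 (lexx 1).
have PN : P <= N%:R * (eps / 2) := le_trans (arclen_le ler01 gamL) LN.
have arclen_eq0_gam a b :
    0 <= a -> a <= b -> b <= 1 -> arclen gam a b = 0 -> gam a = gam b.
  move=> a0 ab b1 ab0; apply/eqP; rewrite -subr_eq0 -oppr_eq0 opprB; apply/eqP/enorm_eq0.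
  by apply/le_anti; rewrite enorm_ge0 -ab0 (enorm_le_arclen gamL).
have idist_le a b : 0 <= a <= 1 -> 0 <= b <= 1 ->
    (idist Om (gam a) (gam b) <= `|arclen gam 0 b - arclen gam 0 a|%:E)%E.
  wlog ab : a b / a <= b => [wlog_ab a01 b01|/andP[a0 a1] /andP[b0 b1]].
    by have [/wlog_ab->//|/ltW/wlog_ab] := leP a b; rewrite idist_sym distrC; exact.
  rewrite (arclen_add gamL (lexx 0) a0 ab b1) addrAC subrr add0r ger0_norm.
    exact: idist_le_arclen gam_cont _ gamL a0 ab b1.
  exact: (arclen_ge0 gamL a0 ab b1).
(* the [j]-th point is where the arclength from [x] reaches [min (j eps / 2) P] *)
have e2_gt0 : 0 < eps / 2 by rewrite divr_gt0.
have target j : exists c, 0 <= c <= 1 /\ arclen gam 0 c = Order.min (j%:R * (eps / 2)) P.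
  have [jP|Pj] := leP (j%:R * (eps / 2)) P.
    have [c c01 cE] := arclen0_ivt gamL gam_cont (mulr_ge0 (ler0n _ j) (ltW e2_gt0)) jP.
    by exists c.
  by exists 1; rewrite ler01 lexx.
have [s sP] := choice target.
exists (fun j => gam (s j)); split.
- have [/andP[s0 s1] s0E] := sP 0%N; rewrite -gam0 (arclen_eq0_gam 0 (s 0%N)) //.
  by rewrite s0E mul0r min_l.
- have [/andP[s0 s1] sNE] := sP N; rewrite (arclen_eq0_gam (s N) 1) ?gam1 //.
  by have := arclen_add gamL (lexx 0) s0 s1 (lexx 1); rewrite -/P sNE min_r //; lra.
move=> j jN; have [sj01 sjE] := sP j; have [sj1_01 sj1E] := sP j.+1; split.
  by apply: gamOm.
apply: le_lt_trans (idist_le _ _ sj01 sj1_01) _; rewrite lte_fin sjE sj1E.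
rewrite -natr1 mulrDl mul1r.
have [j1P|Pj1] := leP (j%:R * (eps / 2) + eps / 2) P;
  have [jP|Pj] := leP (j%:R * (eps / 2)) P; rewrite ltr_norml; apply/andP; split; lra.
Qed.

Lemma bdry_chain_of_width W x : Om x -> (width Om < W%:E)%E -> 0 < eps ->
  exists2 N : nat, N%:R <= 2 * W / eps + 1 & bdry_chain x N.
Proof.
move=> Om_x OmW eps0.
have : (ereal_inf [set idist Om y x | y in bdry Om] < W%:E)%E.
  by apply: le_lt_trans OmW; apply: ereal_sup_ubound; exists x.
move=> /ereal_inf_lt[_ [y y_bdry <-]] /ereal_inf_lt[_ [gam gamP <-]] gamW.
have gamL : chord_sums_le (fun s => gam (1 - s)) 0 1 W.
  by apply/path_length_leP; apply: le_trans (path_length_rev gam) (ltW gamW).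
have W0 : 0 <= W.
  by apply: le_trans (gamL _ _ (partition1P ler01)); exact: chord_sum_ge0.
exists (Num.truncn (2 * W / eps)).+1.
  by rewrite -natr1 lerD2r truncn_le; apply: divr_ge0; [exact: mulr_ge0 | exact: ltW].
apply: (bdry_chain_of_path (path_in_rev gamP) gamL y_bdry eps0).
rewrite mulrA ler_pdivlMr // mulrC -ler_pdivrMr //.
exact/ltW/truncnS_gt.
Qed.

End BoundaryChains.

Section BoundarySteps.
Context {R : realType} {n : nat}.
Notation V := 'rV[R]_n.
Variables (Om : set V) (eps : R).

(* [0] when [x] has no chain to the boundary *)
Definition bdry_steps (x : V) : nat := xget 0%N
  [set N | bdry_chain Om eps x N /\ forall M, bdry_chain Om eps x M -> (N <= M)%N].

Lemma bdry_stepsP x N : bdry_chain Om eps x N ->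
  bdry_chain Om eps x (bdry_steps x) /\
  forall M, bdry_chain Om eps x M -> (bdry_steps x <= M)%N.
Proof.
move=> xN; pose P N := `[< bdry_chain Om eps x N >].
have [|N' /asboolP x_N' N'_min] := ex_minnP (P := P); first by exists N; apply/asboolP.
apply: (@xgetI _ 0%N
  [set N | bdry_chain Om eps x N /\ forall M, bdry_chain Om eps x M -> (N <= M)%N] N').
by split=> // M /asboolP/N'_min.
Qed.

End BoundarySteps.

Definition barrier {R : realType} (b : R) (K j : nat) : R :=
  b * (j%:R * (2 * K%:R - j%:R)).

Section Barrier.
Context {R : realType}.
Variables (b : R) (K : nat).
Hypothesis b_ge0 : 0 <= b.

Lemma barrier_ge0 j : (j <= K)%N -> 0 <= barrier b K j.
Proof.
move=> jK; rewrite /barrier mulr_ge0 // mulr_ge0 //.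
have : j%:R <= K%:R :> R by rewrite ler_nat.
by have := ler0n R K; lra.
Qed.

Lemma barrier_le j : barrier b K j <= b * K%:R ^+ 2.
Proof.
rewrite /barrier ler_wpM2l // -subr_ge0.
have -> : K%:R ^+ 2 - j%:R * (2 * K%:R - j%:R) = (K%:R - j%:R) ^+ 2 :> R by ring.
exact: sqr_ge0.
Qed.

Lemma barrier_homo j j' : (j <= j' <= K)%N -> barrier b K j <= barrier b K j'.
Proof.
move=> /andP[jj' j'K]; rewrite /barrier ler_wpM2l // -subr_ge0.
have -> : j'%:R * (2 * K%:R - j'%:R) - j%:R * (2 * K%:R - j%:R) =
  (j'%:R - j%:R) * ((K%:R - j%:R) + (K%:R - j'%:R)) :> R by ring.
have jj'R : j%:R <= j'%:R :> R by rewrite ler_nat.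
have j'KR : j'%:R <= K%:R :> R by rewrite ler_nat.
by apply: mulr_ge0; lra.
Qed.

Lemma barrier_second_diff j :
  barrier b K j + barrier b K j.+2 - 2 * barrier b K j.+1 = - (2 * b).
Proof. by rewrite /barrier -[j.+2]addn2 -[j.+1]addn1 !natrD; ring. Qed.

End Barrier.

Section DlapComparison.
Context {R : realType} {n : nat}.
Notation V := 'rV[R]_n.
Variables (Om : set V) (eps c d G : R) (u psi : V -> R).
Hypotheses (u_bounded : exists M, forall x, closure Om x -> `|u x| <= M)
  (psi_ge0 : forall x, closure Om x -> 0 <= psi x)
  (u_bdry : forall y, bdry Om y -> u y - psi y <= G)
  (psi_super : forall x, Om x -> exists2 z, iball Om x eps z &
     forall w, iball Om x eps w -> psi z + psi w - 2 * psi x <= - c)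
  (u_sub : forall x, Om x -> d <= dlap Om eps u x)
  (cd_gt0 : 0 < c + d).

Lemma dlap_comparison x : closure Om x -> u x <= G + psi x.
Proof.
move=> Om_x; have [M uM] := u_bounded.
pose S := [set u y - psi y | y in closure Om].
have S_sup : has_sup S.
  split; first by exists (u x - psi x), x.
  exists M => _ [y Om_y <-]; have := uM y Om_y; have := psi_ge0 Om_y.
  by rewrite ler_norml => ? /andP[]; lra.
have le_supS y : closure Om y -> u y <= sup S + psi y.
  move=> Om_y; have : u y - psi y <= sup S by apply: sup_upper_bound => //; exists y.
  lra.
suff : sup S <= G by have := le_supS x Om_x; lra.
(* otherwise a near-maximiser of [u - psi] is an interior point where
   [dlap u] falls below [d] *)
rewrite leNgt; apply/negP => G_lt_supS.
pose eta := Order.min ((c + d) / 2) (sup S - G).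
have eta_gt0 : 0 < eta by rewrite lt_min divr_gt0 //= subr_gt0.
have [_ [x0 Om_x0 <-] x0_max] := sup_adherent eta_gt0 S_sup.
have eta_le : eta <= (c + d) / 2 /\ eta <= sup S - G by rewrite !ge_min !lexx ?orbT.
have x0_Om : Om x0.
  apply: interior_subset; apply: contrapT => x0_int.
  by have := u_bdry (conj Om_x0 x0_int); lra.
have [z x0z psi_z] := psi_super x0_Om.
pose U := [set u w | w in iball Om x0 eps].
have inf_le : inf U <= u z.
  apply: ge_inf; last by exists z.
  by exists (- M) => _ [w [Om_w _] <-]; have := uM w Om_w; rewrite ler_norml => /andP[].
have sup_le : sup U <= sup S - c - psi z + 2 * psi x0.
  apply: ge_sup => [|_ [w x0w <-]]; first by exists (u z), z.
  by have := le_supS w x0w.1; have := psi_z w x0w; lra.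
have := u_sub x0_Om; have := le_supS z x0z.1; rewrite /dlap -/U; lra.
Qed.

End DlapComparison.

Section BarrierSupersolution.
Context {R : realType} {n : nat}.
Notation V := 'rV[R]_n.
Variables (Om : set V) (eps b : R) (K : nat).
Hypotheses (Om_open : open Om) (b_ge0 : 0 <= b)
  (chains : forall x, closure Om x -> exists2 N, (N < K)%N & bdry_chain Om eps x N).

Let psi x := barrier b K (bdry_steps Om eps x).

Lemma barrier_steps_ge0 x : closure Om x -> 0 <= psi x.
Proof.
move=> Om_x; have [N NK xN] := chains Om_x.
by apply: barrier_ge0 => //; rewrite ltnW // (leq_ltn_trans _ NK) // (bdry_stepsP xN).2.
Qed.

(* the next point [z] of a shortest chain from [x] is one step nearer the
   boundary, and no point of the ball is more than one step farther *)
Lemma barrier_steps_super x : Om x -> exists2 z, iball Om x eps z &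
  forall w, iball Om x eps w -> psi z + psi w - 2 * psi x <= - (2 * b).
Proof.
move=> x_Om; have x_cl := subset_closure x_Om.
have [N NK xN] := chains x_cl; have [x_chain x_min] := bdry_stepsP xN.
have := x_min N xN; rewrite /psi; move: x_chain.
case: (bdry_steps Om eps x) => [[z [z0 z_bdry _]]|k x_chain kN].
  move: z_bdry; rewrite z0 => -[_ x_not_int] _; exfalso; apply: x_not_int.
  by move: Om_open; rewrite openE; apply.
have [z xz z_chain] := bdry_chain_uncons x_chain; exists z => // w xw.
have wx : iball Om w eps x by split; rewrite // idist_sym; exact: xw.2.
have w_chain := bdry_chain_cons wx x_chain.
have kK : (k.+2 <= K)%N by rewrite (leq_ltn_trans kN).
have z_le : (bdry_steps Om eps z <= k <= K)%N.
  by rewrite (bdry_stepsP z_chain).2 // ltnW // ltnW.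
have w_le : (bdry_steps Om eps w <= k.+2 <= K)%N by rewrite (bdry_stepsP w_chain).2.
have := barrier_homo b_ge0 z_le; have := barrier_homo b_ge0 w_le.
by have := barrier_second_diff b K k; lra.
Qed.

End BarrierSupersolution.

Section DlapSolutionBound.
Context {R : realType} {n : nat}.
Notation V := 'rV[R]_n.
Variables (Om : set V) (eps F G W : R) (f : V -> R).
Hypotheses (Om_open : open Om) (W_ge0 : 0 <= W) (OmW : (width Om < W%:E)%E)
  (eps_gt0 : 0 < eps) (F_ge0 : 0 <= F).

Lemma dlap_solution_ub (u : V -> R) :
  (exists M, forall x, closure Om x -> `|u x| <= M) ->
  (forall x, Om x -> - F <= f x) -> (forall y, bdry Om y -> u y <= G) ->
  (forall x, Om x -> dlap Om eps u x = eps ^+ 2 * f x) ->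
  forall x, closure Om x -> u x <= G + (F + 1) / 2 * (2 * W + 2 * eps) ^+ 2.
Proof.
move=> u_bounded f_ge u_bdry u_sol x Om_x.
pose K := (Num.truncn (2 * W / eps + 1)).+1.
pose b := eps ^+ 2 * (F + 1) / 2.
have b_ge0 : 0 <= b by rewrite /b divr_ge0 // mulr_ge0 ?sqr_ge0 // addr_ge0.
have WK_ge0 : 0 <= 2 * W / eps + 1 by rewrite addr_ge0 // divr_ge0 ?mulr_ge0 // ltW.
have chains y : closure Om y -> exists2 N, (N < K)%N & bdry_chain Om eps y N.
  move=> Om_y; have [y_bdry|y_not_bdry] := pselect (bdry Om y).
    by exists 0%N => //; exact: bdry_chain0.
  have y_Om : Om y by apply: interior_subset; apply: contrapT => ?; exact: y_not_bdry.
  have [N N_le yN] := bdry_chain_of_width y_Om OmW eps_gt0.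
  by exists N => //; rewrite ltnS truncn_ge_nat.
pose psi y := barrier b K (bdry_steps Om eps y).
have psi_bdry y : bdry Om y -> psi y = 0.
  move=> y_bdry; have y0 := bdry_chain0 eps y_bdry.
  have : (bdry_steps Om eps y <= 0)%N := (bdry_stepsP y0).2 _ y0.
  by rewrite leqn0 /psi /barrier => /eqP->; rewrite mul0r mulr0.
have u_sub y : Om y -> - (eps ^+ 2 * F) <= dlap Om eps u y.
  by move=> y_Om; rewrite u_sol // -mulrN ler_wpM2l ?sqr_ge0 ?f_ge.
have cd_gt0 : 0 < 2 * b + - (eps ^+ 2 * F) by rewrite /b; have := exprn_gt0 2 eps_gt0; lra.
have u_psi_bdry y : bdry Om y -> u y - psi y <= G.
  by move=> y_bdry; rewrite psi_bdry // subr0 u_bdry.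
have := dlap_comparison u_bounded (barrier_steps_ge0 b_ge0 chains) u_psi_bdry
  (barrier_steps_super Om_open b_ge0 chains) u_sub cd_gt0 Om_x.
have epsK : eps * K%:R <= 2 * W + 2 * eps.
  have K_le : K%:R <= 2 * W / eps + 2.
    have : (Num.truncn (2 * W / eps + 1))%:R <= 2 * W / eps + 1 by rewrite truncn_le.
    by rewrite /K -natr1; lra.
  have -> : 2 * W + 2 * eps = eps * (2 * W / eps + 2) by field; rewrite gt_eqF.
  by apply: ler_wpM2l => //; exact: ltW.
have bK : b * K%:R ^+ 2 <= (F + 1) / 2 * (2 * W + 2 * eps) ^+ 2.
  rewrite (_ : b * K%:R ^+ 2 = (F + 1) / 2 * (eps * K%:R) ^+ 2); last by rewrite /b; ring.
  have epsK_ge0 : 0 <= eps * K%:R by rewrite mulr_ge0 ?ltW.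
  apply: ler_wpM2l; first by rewrite divr_ge0 ?addr_ge0.
  by rewrite lerXn2r ?nnegrE // (le_trans epsK_ge0 epsK).
have := barrier_le K b_ge0 (bdry_steps Om eps x); rewrite /psi; lra.
Qed.

End DlapSolutionBound.

Lemma dlapN {R : realType} {n : nat} (Om : set 'rV[R]_n) eps (u : 'rV[R]_n -> R) x :
  dlap Om eps (fun y => - u y) x = - dlap Om eps u x.
Proof.
rewrite /dlap /inf !image_comp.
have -> : -%R \o (fun y => - u y) = u by apply/funext => y /=; rewrite opprK.
rewrite /comp; ring.
Qed.

Lemma dlap_solution_bounded {R : realType} {n : nat} (Om : set 'rV[R]_n)
    (eps F G W : R) (f u : 'rV[R]_n -> R) :
  open Om -> 0 <= W -> (width Om < W%:E)%E -> 0 < eps -> 0 <= F ->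
  (exists M, forall x, closure Om x -> `|u x| <= M) ->
  (forall x, Om x -> `|f x| <= F) -> (forall y, bdry Om y -> `|u y| <= G) ->
  (forall x, Om x -> dlap Om eps u x = eps ^+ 2 * f x) ->
  forall x, closure Om x -> `|u x| <= G + (F + 1) / 2 * (2 * W + 2 * eps) ^+ 2.
Proof.
move=> Om_open W0 OmW eps0 F0 [M uM] fF uG u_sol x Om_x.
have f_ge y : Om y -> - F <= f y by move=> /fF; rewrite ler_norml => /andP[].
have Nf_ge y : Om y -> - F <= - f y by move=> /fF; rewrite ler_norml lerN2 => /andP[].
rewrite ler_norml -lerNl; apply/andP; split.
  apply: (dlap_solution_ub Om_open W0 OmW eps0 F0 (u := fun y => - u y) _ Nf_ge)
    => // [|y /uG|y y_Om].
  - by exists M => y /uM; rewrite normrN.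
  - by rewrite ler_norml => /andP[]; rewrite lerNl.
  - by rewrite dlapN u_sol // mulrN.
apply: (dlap_solution_ub Om_open W0 OmW eps0 F0 _ f_ge) => // [|y /uG].
  by exists M.
by rewrite ler_norml => /andP[].
Qed.

Unset Implicit Arguments.

Theorem lemma5p1 (R : realType) (n : nat) (Omega : set 'rV[R]_n)
  (f g : 'rV[R]_n -> R) (eps : nat -> R) (u : nat -> 'rV[R]_n -> R) :
  open Omega -> connected Omega -> Omega !=set0 ->
  (width Omega < +oo)%E ->
  (exists M : R, forall x, Omega x -> `|f x| <= M) ->
  {within bdry Omega, continuous g} ->
  (exists M : R, forall y, bdry Omega y -> `|g y| <= M) ->
  (forall i, 0 < eps i) -> eps @ \oo --> 0 ->
  (forall i, exists M : R, forall x, closure Omega x -> `|u i x| <= M) ->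
  (forall i x, Omega x -> dlap Omega (eps i) (u i) x = eps i ^+ 2 * f x) ->
  (forall i y, bdry Omega y -> u i y = g y) ->
  exists M : R, forall i x, closure Omega x -> `|u i x| <= M.
Proof.
move=> Om_open _ [x0 Om_x0] Om_width [F fF] _ [G gG] eps_gt0 eps_cvg.
move=> u_bounded u_sol u_g.
have [W W0 OmW] : exists2 W : R, 0 <= W & (width Omega < W%:E)%E.
  move: Om_width; case: (width Omega) => [r _| //|_]; last by exists 0; rewrite ?ltNyr.
  by exists (`|r| + 1); rewrite ?addr_ge0 // lte_fin (le_lt_trans (ler_norm r)) ?ltrDl.
have F0 : 0 <= F := le_trans (normr_ge0 _) (fF x0 Om_x0).
have [E epsE] := (@ex_bound _ _ _ eps _ (globally_properfilter (I : setT 0%N))).1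
  (cvg_seq_bounded (cvgP _ eps_cvg)).
exists (G + (F + 1) / 2 * (2 * W + 2 * E) ^+ 2) => i x Om_x.
have ui_bdry y : bdry Omega y -> `|u i y| <= G by move=> y_bdry; rewrite u_g ?gG.
apply: le_trans (dlap_solution_bounded Om_open W0 OmW (eps_gt0 i) F0 (u_bounded i) fF
  ui_bdry (u_sol i) Om_x) _.
have epsi_le : eps i <= E := le_trans (ler_norm _) (epsE i I).
have W_eps_ge0 : 0 <= 2 * W + 2 * eps i by rewrite addr_ge0 ?mulr_ge0 // ltW.
rewrite lerD2l; apply: ler_wpM2l; first by rewrite divr_ge0 ?addr_ge0.
have W_le : 2 * W + 2 * eps i <= 2 * W + 2 * E by lra.
by rewrite lerXn2r ?nnegrE ?(le_trans W_eps_ge0 W_le).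
Qed.
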